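(* Let $\mathcal{X}$ be a finite set of actions, $\mathcal{Y}$ a finite set of responses, $\mathcal{H}\subseteq\mathcal{Y}^{\mathcal{X}}$, $\mathrm{cost}:\mathcal{X}\times\mathcal{Y}\to\mathbb{R}_+$. Let $f:2^{\mathcal{X}\times\mathcal{Y}}\to\mathbb{R}_+$ and $Q>0$; suppose $f$ is submodular, $f(\emptyset)=0$, and $f$ is consistency-aware for $Q$. Then there exists $x\in\mathcal{X}$ such that $$u^f(x,\emptyset)\ge\frac{Q}{2\min(g_{\mathrm{cost}},R_{\mathrm{cost}})\,\mathrm{OPT}}.$$
   Context: The true state is an unknown $h^*\in\mathcal{H}$. An interactive algorithm, given the observed set $S$ of action-response pairs, either selects an action $x$ (observing $(x,h^*(x))$) or terminates; $S^h[\mathcal{A}]$ is the set collected until termination when $h^*=h$; $\mathrm{cost}(\mathcal{A})=\max_{h\in\mathcal{H}}\sum_{(x,y)\in S^h[\mathcal{A}]}\mathrm{cost}(x,y)$; $\mathrm{OPT}$ is the minimum of $\mathrm{cost}(\mathcal{A})$ over interactive algorithms with $f(S^h[\mathcal{A}])\ge Q$ for all $h\in\mathcal{H}$. Version space $V(S)=\{h\in\mathcal{H}\mid\forall(x,y)\in S,\ y=h(x)\}$. $f$ is consistency-aware for $Q$ if $f(S)\ge Q$ whenever $V(S)=\emptyset$. $\delta_g(z\mid A)=g(A\cup\{z\})-g(A)$; $u^f(x,S)=\min_{h\in V(S)}\frac{\delta_{\min(f,Q)}((x,h(x))\mid S)}{\mathrm{cost}(x,h(x))}$. $R_{\mathrm{cost}}=\max_x\frac{\max_y\mathrm{cost}(x,y)}{\min_y\mathrm{cost}(x,y)}$.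 With $\phi(x)$ the second-smallest value of the multiset $\{\mathrm{cost}(x,y)\mid y\in\mathcal{Y}\}$, $\phi_{\min}=\min_x\phi(x)$ and $c_{\max}=\max_{(x,y)}\mathrm{cost}(x,y)$, $g_{\mathrm{cost}}=c_{\max}/\phi_{\min}$. *)

From HB Require Import structures.
From mathcomp Require Import all_boot all_order all_algebra.
Set Implicit Arguments. Unset Strict Implicit. Unset Printing Implicit Defensive.
Import Order.TTheory GRing.Theory Num.Theory.
Local Open Scope ring_scope.

Section Defs.
Variable R : realFieldType.

(* minimum / maximum of a non-empty finite list of reals (0 on the empty list;
   only ever used on non-empty lists below). *)
Definition minseq (s : seq R) : R :=
  if s is a :: t then foldr Num.min a t else 0.
Definition maxseq (s : seq R) : R :=
  if s is a :: t then foldr Num.max a t else 0.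

Variables (X Y : finType).

Definition vspace (H : {set {ffun X -> Y}}) (S : {set X * Y}) : {set {ffun X -> Y}} :=
  [set h in H | [forall p in S, h p.1 == p.2]].

Definition submodular (f : {set X * Y} -> R) : Prop :=
  forall A B : {set X * Y}, f (A :|: B) + f (A :&: B) <= f A + f B.

Definition consistency_aware (H : {set {ffun X -> Y}}) (f : {set X * Y} -> R) (Q : R) : Prop :=
  forall S : {set X * Y}, vspace H S = set0 -> Q <= f S.

Definition delta (g : {set X * Y} -> R) (z : X * Y) (A : {set X * Y}) : R :=
  g (z |: A) - g A.

Definition ufun (H : {set {ffun X -> Y}}) (cost : X -> Y -> R)
  (f : {set X * Y} -> R) (Q : R) (x : X) (S : {set X * Y}) : R :=
  minseq [seq delta (fun T => Num.min (f T) Q) (x, h x) S / cost x (h x)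
         | h : {ffun X -> Y} <- enum (vspace H S)].

Definition Rcost (cost : X -> Y -> R) : R :=
  maxseq [seq maxseq [seq cost x y | y <- enum Y] / minseq [seq cost x y | y <- enum Y]
         | x <- enum X].

(* phi(x) = second smallest element of the multiset {cost(x,y) | y in Y}. *)
Definition phi (cost : X -> Y -> R) (x : X) : R :=
  nth 0 (sort <=%R [seq cost x y | y <- enum Y]) 1.
Definition phi_min (cost : X -> Y -> R) : R := minseq [seq phi cost x | x <- enum X].
Definition c_max (cost : X -> Y -> R) : R := maxseq [seq cost x y | x <- enum X, y <- enum Y].
Definition gcost (cost : X -> Y -> R) : R := c_max cost / phi_min cost.

(* Interactive (deterministic) algorithms: given the observed set S, either
   select an action (Some x) or terminate (None). *)
Definition algorithm := {set X * Y} -> option X.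

Fixpoint run (A : algorithm) (h : {ffun X -> Y}) (k : nat) : {set X * Y} :=
  if k is k'.+1 then
    let S := run A h k' in
    match A S with Some x => (x, h x) |: S | None => S end
  else set0.

Definition terminates (A : algorithm) (h : {ffun X -> Y}) : Prop :=
  exists k, A (run A h k) = None.

(* S^h[A]: the set collected until termination (a terminating run stops after
   at most #|X| rounds, see [collected_correct] below). *)
Definition collected (A : algorithm) (h : {ffun X -> Y}) : {set X * Y} := run A h #|X|.

Definition alg_cost (H : {set {ffun X -> Y}}) (cost : X -> Y -> R) (A : algorithm) : R :=
  maxseq [seq \sum_(p in collected A h) cost p.1 p.2 | h : {ffun X -> Y} <- enum H].

Definition feasible (H : {set {ffun X -> Y}}) (f : {set X * Y} -> R) (Q : R) (A : algorithm) : Prop :=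
  forall h, h \in H -> terminates A h /\ Q <= f (collected A h).

Definition is_OPT (H : {set {ffun X -> Y}}) (cost : X -> Y -> R)
  (f : {set X * Y} -> R) (Q : R) (OPT : R) : Prop :=
  (exists A, feasible H f Q A /\ alg_cost H cost A = OPT) /\
  (forall A, feasible H f Q A -> OPT <= alg_cost H cost A).

End Defs.

(* Justification of [collected]: any terminating run stops within #|X| rounds,
   so [collected A h] is exactly the set S^h[A] at termination. *)
Section S.
Variables (X Y : finType) (A : algorithm X Y) (h : {ffun X -> Y}).

Lemma run_fix k : A (run A h k) = None -> forall j, (k <= j)%N -> run A h j = run A h k.
Proof.
move=> Hk; elim=> [|j IH]; first by rewrite leqn0 => /eqP ->.
rewrite leq_eqVlt => /orP [/eqP <- //| ltkj].
by rewrite /= IH // Hk.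
Qed.

Lemma run_stuck k x : A (run A h k) = Some x -> (x, h x) \in run A h k ->
  forall j, (k <= j)%N -> run A h j = run A h k.
Proof.
move=> Hk Hin; elim=> [|j IH]; first by rewrite leqn0 => /eqP ->.
rewrite leq_eqVlt => /orP [/eqP <- //| ltkj].
by rewrite /= IH // Hk; apply/setP => z; rewrite in_setU1; case: eqP => // ->.
Qed.

Lemma run_sub k : run A h k \subset [set (x, h x) | x : X].
Proof.
elim: k => [|k IH] /=; first exact: sub0set.
case: (A _) => [x|] //; rewrite subUset IH andbT sub1set.
by apply/imsetP; exists x.
Qed.

Lemma collected_correct k : A (run A h k) = None ->
  collected A h = run A h k /\ A (collected A h) = None.
Proof.
move=> Hk.
have ex : exists k, (fun k => A (run A h k) == None) k by exists k; rewrite Hk.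
case: (ex_minnP ex) => k0 /eqP Hk0 Hmin.
have live : forall i, (i <= k0)%N -> #|run A h i| = i.
  elim=> [_|i IH lt]; first by rewrite /= cards0.
  have lti : (i < k0)%N by [].
  rewrite /=; case E: (A (run A h i)) => [x|]; last first.
    by move: (Hmin i); rewrite E eqxx => /(_ isT); rewrite leqNgt lti.
  case: (boolP ((x, h x) \in run A h i)) => Hin.
    have Heq := run_stuck E Hin (ltnW lti).
    by move: Hk0; rewrite Heq E.
  by rewrite cardsU1 Hin IH // ltnW.
have lek0 : (k0 <= #|X|)%N.
  rewrite -(live k0 (leqnn _)).
  apply: (leq_trans (subset_leq_card (run_sub k0))).
  exact: leq_imset_card.
have -> : collected A h = run A h k0 by exact: run_fix.
split=> //.
by rewrite (run_fix Hk0 (Hmin k (introT eqP Hk))).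
Qed.
End S.

From HB Require Import structures.
From mathcomp Require Import all_boot all_order all_algebra.
From mathcomp Require Import lra.
Import Order.TTheory GRing.Theory Num.Theory.
Set Implicit Arguments.
Unset Strict Implicit.
Unset Printing Implicit Defensive.
Local Open Scope ring_scope.

(* For every action x fix a hypothesis h_x in H attaining the minimum in u(x, {}),
   and let g be the (possibly unrealizable) state answering each x with h_x(x).
   Run an optimal algorithm against g.  If the version space never becomes empty,
   the run coincides with the run on a consistent h in H, which reaches Q at cost
   at most OPT.  Otherwise, up to the step at which it becomes empty the run again
   coincides with a run on some h in H, hence costs at most OPT, and the last query
   x costs at most min(g_cost, R_cost) OPT: x has a response of cost at most OPT,
   and the first query splitting H exhibits two distinct responses of cost at most
   OPT, so phi_min <= OPT.  Either way we get a set T consistent with g with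
   f(T) >= Q and cost(T) <= 2 min(g_cost, R_cost) OPT.  As min(f, Q) is
   subadditive, Q <= sum_(p in T) min(f {p}, Q) = sum_(p in T) u(p) cost(p), and
   an averaging argument yields the action. *)

Lemma map_enum_neq0 (T : finType) (U : eqType) (A : {pred T}) (F : T -> U) t :
  t \in A -> [seq F x | x <- enum A] != [::].
Proof. by move=> tA; rewrite -size_eq0 size_map -cardE -lt0n; apply/card_gt0P; exists t. Qed.

Section RealSeqs.
Variable R : realFieldType.
Implicit Types (s : seq R) (a m : R).

Lemma minseq_le s a : a \in s -> minseq s <= a.
Proof.
case: s => [//|b t] /=.
elim: t b a => [|c t IH] b a /=; first by rewrite inE => /eqP ->.
rewrite !inE ge_min => /or3P [/eqP ->|/eqP ->|at_].
- by rewrite IH ?orbT ?mem_head.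
- by rewrite lexx.
- by rewrite IH ?orbT // inE at_ orbT.
Qed.

Lemma minseq_mem s : s != [::] -> minseq s \in s.
Proof.
case: s => [//|b t] _ /=.
elim: t b => [|c t IH] b /=; first by rewrite inE.
rewrite minEle; case: ifP => _; first by rewrite !inE eqxx orbT.
by move: (IH b); rewrite !inE => /orP [->|->]; rewrite ?orbT.
Qed.

Lemma le_maxseq s a : a \in s -> a <= maxseq s.
Proof.
case: s => [//|b t] /=.
elim: t b a => [|c t IH] b a /=; first by rewrite inE => /eqP ->.
rewrite !inE le_max => /or3P [/eqP ->|/eqP ->|at_].
- by rewrite IH ?orbT ?mem_head.
- by rewrite lexx.
- by rewrite IH ?orbT // inE at_ orbT.
Qed.

Lemma nth_sort1_le s m : (1 < count (<= m) s)%N -> nth 0 (sort <=%R s) 1 <= m.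
Proof.
rewrite -(permP (permEl (perm_sort <=%R s))).
have : sorted <=%R (sort <=%R s) by apply: sort_sorted; exact: le_total.
case: (sort <=%R s) => [|c0 [|c1 t]] //=; first by case: (c0 <= m).
case/andP=> _ path_c1_t two_le_m; rewrite leNgt; apply/negP => m_lt_c1.
move: two_le_m.
have /eqP -> : count (<= m) t == 0%N.
  rewrite -leqn0 leqNgt -has_count; apply/hasPn => c c_t; rewrite -ltNge.
  by apply: lt_le_trans m_lt_c1 _; move/allP: (order_path_min le_trans path_c1_t); apply.
rewrite addn0 (leNgt c1) m_lt_c1; by case: (c0 <= m).
Qed.

Lemma min_subadd a b c m : 0 <= b -> 0 <= c -> 0 <= m -> a <= b + c ->
  Num.min a m <= Num.min b m + Num.min c m.
Proof. by case: (leP a m); case: (leP b m); case: (leP c m); lra. Qed.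

End RealSeqs.

Lemma exists_crossing (P : pred nat) n :
  P 0 -> ~~ P n -> exists2 k, (k < n)%N & P k && ~~ P k.+1.
Proof.
elim: n => [-> //|n IH] P0 not_Pn1.
case: (boolP (P n)) => [Pn | not_Pn]; first by exists n; rewrite ?Pn.
by have [k lt_kn Pk] := IH P0 not_Pn; exists k => //; apply: ltnW.
Qed.

Section SetFunctions.
Variables (R : realFieldType) (T : finType).
Implicit Types (S : {set T}) (F : {set T} -> R) (w : T -> R).

Lemma subadditive_le_sum1 F : F set0 = 0 ->
    (forall z S, F (z |: S) <= F [set z] + F S) ->
  forall S, F S <= \sum_(z in S) F [set z].
Proof.
move=> F0 F_subadd S; elim: {S}_.+1 {-2}S (ltnSn #|S|) => // n IH S lt_Sn.
have [-> | [z zS]] := set_0Vmem S; first by rewrite big_set0 F0.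
rewrite (big_setD1 _ zS) /= -{1}(setD1K zS).
apply: le_trans (F_subadd _ _) _; rewrite lerD2l; apply: IH.
by rewrite -ltnS (leq_trans _ lt_Sn) // (cardsD1 z S) zS.
Qed.

Lemma sum_setU1_le w z S : (forall i, 0 <= w i) ->
  \sum_(i in z |: S) w i <= w z + \sum_(i in S) w i.
Proof.
move=> w_ge0; have [zS | zNS] := boolP (z \in S); last by rewrite big_setU1.
by rewrite (setUidPr _) ?sub1set // lerDr.
Qed.

Lemma exists_ge_weighted_avg (S : {set T}) (a w : T -> R) (Q B : R) :
    0 < Q -> (forall i, 0 < w i) -> \sum_(i in S) w i <= B ->
    Q <= \sum_(i in S) a i * w i ->
  exists2 i, i \in S & Q / B <= a i.
Proof.
move=> Q_gt0 w_gt0 sum_w_le Q_le.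
have [/exists_inP // | /exists_inPn a_lt] := boolP [exists i in S, Q / B <= a i].
exfalso; have [S0 | [z zS]] := set_0Vmem S.
  by move: Q_le; rewrite S0 big_set0 leNgt Q_gt0.
have B_gt0 : 0 < B.
  by apply: lt_le_trans sum_w_le; rewrite (big_setD1 z) //= ltr_wpDr ?sumr_ge0 // => i _; apply: ltW.
suff : \sum_(i in S) a i * w i < Q by rewrite ltNge Q_le.
apply: (@lt_le_trans _ _ (\sum_(i in S) Q / B * w i)).
  apply: ltr_sum; first by apply/hasP; exists z; rewrite ?mem_index_enum.
  by move=> i iS; rewrite ltr_pM2r // ltNge a_lt.
rewrite -mulr_sumr; apply: le_trans (ler_wpM2l _ sum_w_le) _.
  by rewrite divr_ge0 ?ltW.
by rewrite divfK // gt_eqF.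
Qed.

End SetFunctions.

Section Runs.
Variables (X Y : finType) (H : {set {ffun X -> Y}}) (A : algorithm X Y).
Implicit Types (g h : {ffun X -> Y}) (S : {set X * Y}).

Lemma vspace0 : vspace H set0 = H.
Proof. by apply/setP => h; rewrite inE andb_idr // => _; apply/forall_inP => p; rewrite inE. Qed.

Lemma mem_vspaceP S h :
  reflect (h \in H /\ forall p, p \in S -> h p.1 = p.2) (h \in vspace H S).
Proof.
rewrite inE; apply: (iffP andP) => -[hH cons]; split => //.
  by move=> p /(forall_inP cons) /eqP.
by apply/forall_inP => p /cons ->.
Qed.

Lemma run_graph g k p : p \in run A g k -> g p.1 = p.2.
Proof. by move/(subsetP (run_sub A g k)) => /imsetP [x _ ->]. Qed.

Lemma run_mono g {i j} : (i <= j)%N -> run A g i \subset run A g j.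
Proof.
elim: j => [|j IH]; first by rewrite leqn0 => /eqP ->.
rewrite leq_eqVlt => /predU1P [-> // | /IH sub_ij]; apply: subset_trans sub_ij _.
by rewrite /=; case: (A _) => [x|] //; apply: subsetU1.
Qed.

Lemma run_consistent g h k :
  (forall p, p \in run A g k -> h p.1 = p.2) -> run A h k = run A g k.
Proof.
move=> h_cons; suff : forall i, (i <= k)%N -> run A h i = run A g i by apply.
elim=> [//|i IH] lt_ik; rewrite /= IH 1?ltnW //.
case E: (A _) => [x|] //; rewrite [h x](h_cons (x, g x)) //.
by move/subsetP: (run_mono g lt_ik); apply; rewrite /= E setU11.
Qed.

Lemma run_vspace g h k : h \in vspace H (run A g k) -> run A h k = run A g k.
Proof. by case/mem_vspaceP => _; apply: run_consistent. Qed.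

End Runs.

Section Costs.
Variables (R : realFieldType) (X Y : finType) (cost : X -> Y -> R).
Hypothesis cost_gt0 : forall x y, 0 < cost x y.

Implicit Types (S T : {set X * Y}).

Definition setcost S : R := \sum_(p in S) cost p.1 p.2.

Lemma setcost_mono S T : S \subset T -> setcost S <= setcost T.
Proof.
move=> sub_ST; rewrite /setcost [leRHS](big_setID S) /= (setIidPr sub_ST).
by rewrite lerDl sumr_ge0 // => p _; apply: ltW.
Qed.

Lemma cost_le_setcost p S : p \in S -> cost p.1 p.2 <= setcost S.
Proof.
by move=> pS; rewrite /setcost (big_setD1 p) //= lerDl sumr_ge0 // => q _; apply: ltW.
Qed.

Lemma phi_le_max x a b : a != b -> phi cost x <= Num.max (cost x a) (cost x b).
Proof.
move=> neq_ab; apply: nth_sort1_le; rewrite count_map.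
have -> : count (preim (cost x) (<= Num.max (cost x a) (cost x b))) (enum Y)
    = #|[pred y | cost x y <= Num.max (cost x a) (cost x b)]|.
  by rewrite enumT cardE /enum_mem size_filter; apply: eq_count => y; rewrite !inE.
rewrite (leq_trans _ (subset_leq_card (_ : [set a; b] \subset _))) ?cards2 ?neq_ab //.
by apply/subsetP => y; rewrite !inE => /orP [] /eqP ->; rewrite le_max lexx ?orbT.
Qed.

Lemma cost_le_Rcost x y y' : cost x y <= Rcost cost * cost x y'.
Proof.
set cmax := maxseq [seq cost x z | z <- enum Y].
set cmin := minseq [seq cost x z | z <- enum Y].
have cmin_le : cmin <= cost x y' by rewrite minseq_le // map_f ?mem_enum.
have cmin_gt0 : 0 < cmin.
  suff : cmin \in [seq cost x z | z <- enum Y] by case/mapP => z _ ->.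
  exact/minseq_mem/(@map_enum_neq0 _ _ _ _ y).
have le_cmax : cost x y <= cmax by rewrite le_maxseq // map_f ?mem_enum.
have ratio_le : cmax / cmin <= Rcost cost.
  by apply: le_maxseq; apply/mapP; exists x; rewrite ?mem_enum.
have ratio_ge0 : 0 <= cmax / cmin.
  by rewrite divr_ge0 ?ltW // (lt_le_trans (cost_gt0 x y)).
have cmaxE : cmax = cmax / cmin * cmin by rewrite divfK // gt_eqF.
by apply: (le_trans le_cmax); rewrite {1}cmaxE ler_pM // ltW.
Qed.

Lemma Rcost_ge1 (x0 : X) (y0 : Y) : 1 <= Rcost cost.
Proof. by rewrite -(ler_pMl _ (cost_gt0 x0 y0)) cost_le_Rcost. Qed.

Lemma cost_le_c_max x y : cost x y <= c_max cost.
Proof. by apply: le_maxseq; apply: (allpairs_f (fun x y => cost x y)); rewrite mem_enum. Qed.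

Hypothesis card_Y_gt1 : (1 < #|Y|)%N.

Lemma phi_mem x : exists y, phi cost x = cost x y.
Proof.
have : phi cost x \in [seq cost x y | y <- enum Y].
  by rewrite /phi -(mem_sort <=%R) mem_nth // size_sort size_map -cardE.
by case/mapP => y _ ->; exists y.
Qed.

Lemma phi_min_mem (x0 : X) : exists x, phi_min cost = phi cost x.
Proof.
have : phi_min cost \in [seq phi cost x | x <- enum X].
  exact/minseq_mem/(@map_enum_neq0 _ _ _ _ x0).
by case/mapP => x _ ->; exists x.
Qed.

Lemma phi_min_gt0 (x0 : X) : 0 < phi_min cost.
Proof. by have [x ->] := phi_min_mem x0; have [y ->] := phi_mem x. Qed.

Lemma cost_le_gcost x y : cost x y <= gcost cost * phi_min cost.
Proof. by rewrite divfK ?gt_eqF ?(phi_min_gt0 x) // cost_le_c_max. Qed.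

Lemma gcost_ge1 (x0 : X) : 1 <= gcost cost.
Proof.
have [x phi_x] := phi_min_mem x0; have [y phi_xy] := phi_mem x.
by rewrite ler_pdivlMr ?(phi_min_gt0 x0) // mul1r phi_x phi_xy cost_le_c_max.
Qed.

Lemma cost_le_min_gcost_Rcost x y y' B :
    cost x y' <= B -> phi_min cost <= B ->
  cost x y <= Num.min (gcost cost) (Rcost cost) * B.
Proof.
move=> le_y' phi_le; have B_ge0 : 0 <= B by apply: le_trans phi_le; apply: ltW (phi_min_gt0 x).
rewrite minr_pMl // le_min; apply/andP; split.
- apply: (le_trans (cost_le_gcost x y)); apply: ler_wpM2l phi_le.
  exact: le_trans ler01 (gcost_ge1 x).
- apply: (le_trans (cost_le_Rcost x y y')); apply: ler_wpM2l le_y'.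
  exact: le_trans ler01 (Rcost_ge1 x y').
Qed.

End Costs.

Section Adversary.
Variables (R : realFieldType) (X Y : finType) (H : {set {ffun X -> Y}}).
Variables (cost : X -> Y -> R) (f : {set X * Y} -> R) (Q OPT : R) (A : algorithm X Y).
Hypotheses (cost_gt0 : forall x y, 0 < cost x y) (card_Y_gt1 : (1 < #|Y|)%N).
Hypotheses (H_neq0 : H != set0) (Q_gt0 : 0 < Q) (f0 : f set0 = 0).
Hypotheses (f_ca : consistency_aware H f Q) (A_feasible : feasible H f Q A).
Hypothesis A_cost : alg_cost H cost A = OPT.

Lemma setcost_run_le h k : h \in H -> (k <= #|X|)%N -> setcost cost (run A h k) <= OPT.
Proof.
move=> hH le_kn; apply: le_trans (setcost_mono cost_gt0 (run_mono A h le_kn)) _.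
by rewrite -A_cost; apply: le_maxseq; apply/mapP; exists h; rewrite ?mem_enum.
Qed.

Lemma cost_query_le h k x :
  h \in H -> (k < #|X|)%N -> A (run A h k) = Some x -> cost x (h x) <= OPT.
Proof.
move=> hH lt_kn Ax; apply: le_trans (setcost_run_le hH lt_kn).
have : (x, h x) \in run A h k.+1 by rewrite /= Ax setU11.
exact: cost_le_setcost.
Qed.

Lemma exists_pair_le_OPT : exists p : X * Y, cost p.1 p.2 <= OPT.
Proof.
have [h hH] := set0Pn _ H_neq0.
have /set0Pn [p p_run] : run A h #|X| != set0.
  by apply: contraTneq (proj2 (A_feasible hH)); rewrite /collected => ->; rewrite f0 -ltNge.
by exists p; apply: le_trans (cost_le_setcost cost_gt0 p_run) (setcost_run_le hH _).
Qed.

Lemma OPT_gt0 : 0 < OPT.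
Proof. by have [p] := exists_pair_le_OPT; apply: lt_le_trans (cost_gt0 _ _). Qed.

Lemma min_gcost_Rcost_ge1 : 1 <= Num.min (gcost cost) (Rcost cost).
Proof.
have [[x y] _] := exists_pair_le_OPT.
by rewrite le_min (gcost_ge1 cost_gt0 card_Y_gt1 x) (Rcost_ge1 cost_gt0 x y).
Qed.

Variable g : {ffun X -> Y}.
Hypothesis g_realizable : forall x, exists2 h, h \in H & h x = g x.

Lemma phi_min_le_OPT k :
  (k <= #|X|)%N -> vspace H (run A g k) != H -> phi_min cost <= OPT.
Proof.
move=> le_kn Vk_neqH.
have [j lt_jk /andP [/eqP Vj Vj1_neqH]] : exists2 j, (j < k)%N &
    (vspace H (run A g j) == H) && (vspace H (run A g j.+1) != H).
  by apply: exists_crossing; rewrite //= vspace0.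
have lt_jn : (j < #|X|)%N := leq_trans lt_jk le_kn.
case Ax: (A (run A g j)) => [x|]; last by rewrite /= Ax Vj eqxx in Vj1_neqH.
have cost_le h : h \in vspace H (run A g j) -> cost x (h x) <= OPT.
  move=> hV; have /mem_vspaceP [hH _] := hV.
  by apply: (cost_query_le hH lt_jn); rewrite (run_vspace hV).
have [h1 h1H h1_out] : exists2 h1, h1 \in H & h1 \notin vspace H (run A g j.+1).
  apply/subsetPn; apply: contra Vj1_neqH => sub; rewrite eqEsubset sub andbT.
  by apply/subsetP => h /mem_vspaceP [].
have h1_Vj : h1 \in vspace H (run A g j) by rewrite Vj.
have h1x_neq : h1 x != g x.
  apply: contra h1_out => /eqP h1x; apply/mem_vspaceP; split=> // p.
  rewrite /= Ax in_setU1 => /predU1P [-> // | p_run].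
  by case/mem_vspaceP: h1_Vj => _; apply.
have [h2 h2H h2x] := g_realizable x.
have h2_Vj : h2 \in vspace H (run A g j) by rewrite Vj.
apply: (le_trans (minseq_le _)); first by apply: map_f; rewrite mem_enum.
apply: (le_trans (phi_le_max cost x h1x_neq)).
by rewrite ge_max (cost_le _ h1_Vj) -h2x (cost_le _ h2_Vj).
Qed.

Lemma exists_cheap_goal_set : exists T, [/\ Q <= f T,
  setcost cost T <= 2 * Num.min (gcost cost) (Rcost cost) * OPT &
  forall p, p \in T -> g p.1 = p.2].
Proof.
set M := Num.min (gcost cost) (Rcost cost); rewrite -mulrA.
have OPT_le : OPT <= M * OPT by apply: ler_peMl (ltW OPT_gt0) min_gcost_Rcost_ge1.
have [/eqP Vn0 | /set0Pn [h hV]] := boolP (vspace H (run A g #|X|) == set0); last first.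
  have /mem_vspaceP [hH _] := hV.
  exists (run A g #|X|); split; last exact: run_graph.
  - by rewrite -(run_vspace hV); have [] := A_feasible hH.
  - by rewrite -(run_vspace hV); have := setcost_run_le hH (leqnn _); have := OPT_gt0; lra.
have [k lt_kn /andP [Vk_neq0 /negPn/eqP Vk1]] : exists2 k, (k < #|X|)%N &
    (vspace H (run A g k) != set0) && ~~ (vspace H (run A g k.+1) != set0).
  by apply: exists_crossing; rewrite /= ?vspace0 ?Vn0 ?eqxx.
case Ax: (A (run A g k)) => [x|]; last by move: Vk_neq0; rewrite -Vk1 /= Ax eqxx.
have [h hV] := set0Pn _ Vk_neq0; have /mem_vspaceP [hH _] := hV.
have run_k1 : run A g k.+1 = (x, g x) |: run A g k by rewrite /= Ax.
exists (run A g k.+1); split; last exact: run_graph.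
- exact: f_ca.
- have cost_hx : cost x (h x) <= OPT.
    by apply: (cost_query_le hH lt_kn); rewrite (run_vspace hV).
  have phi_min_le : phi_min cost <= OPT.
    by apply: (phi_min_le_OPT lt_kn); rewrite Vk1 eq_sym.
  have cost_gx : cost x (g x) <= M * OPT.
    by have := cost_le_min_gcost_Rcost cost_gt0 card_Y_gt1 (g x) cost_hx phi_min_le.
  have := setcost_run_le hH (ltnW lt_kn); rewrite (run_vspace hV) => cost_k.
  rewrite run_k1; apply: le_trans (sum_setU1_le _ _ _) _ => [p|]; first exact: ltW.
  by rewrite -/(setcost cost _); lra.
Qed.

End Adversary.

Section GreedyUtility.
Variables (R : realFieldType) (X Y : finType) (H : {set {ffun X -> Y}}).
Variables (cost : X -> Y -> R) (f : {set X * Y} -> R) (Q : R).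

Local Notation u x := (ufun H cost f Q x set0).
Local Notation fQ := (fun S => Num.min (f S) Q).

Lemma ufun0_attained x : H != set0 ->
  exists2 h, h \in H & u x = delta fQ (x, h x) set0 / cost x (h x).
Proof.
case/set0Pn => h0 h0H.
have : u x \in [seq delta fQ (x, h x) set0 / cost x (h x)
    | h : {ffun X -> Y} <- enum (vspace H set0)].
  by apply/minseq_mem/(@map_enum_neq0 _ _ _ _ h0); rewrite vspace0.
by case/mapP => h; rewrite vspace0 mem_enum => hH ->; exists h.
Qed.

Hypotheses (f_ge0 : forall S, 0 <= f S) (Q_gt0 : 0 < Q) (f0 : f set0 = 0).
Hypothesis f_submod : submodular f.

Lemma le_sum_ufun (g : {ffun X -> Y}) T :
    (forall x, u x * cost x (g x) = Num.min (f [set (x, g x)]) Q) ->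
    Q <= f T -> (forall p, p \in T -> g p.1 = p.2) ->
  Q <= \sum_(p in T) u p.1 * cost p.1 p.2.
Proof.
move=> g_ufun QT gT.
have fQ_subadd z S : fQ (z |: S) <= fQ [set z] + fQ S.
  apply: min_subadd (f_ge0 _) (f_ge0 _) (ltW Q_gt0) _.
  by have := f_submod [set z] S; have := f_ge0 ([set z] :&: S); lra.
have fQ0 : fQ set0 = 0 by rewrite /= f0 (min_l (ltW Q_gt0)).
have Q_le : Q <= Num.min (f T) Q by rewrite le_min QT lexx.
apply: le_trans Q_le _.
apply: le_trans (subadditive_le_sum1 fQ0 fQ_subadd T) _.
apply: ler_sum => p pT; rewrite -(gT p pT) g_ufun.
by rewrite (gT p pT) -surjective_pairing.
Qed.

End GreedyUtility.

Theorem lemma6 (R : realFieldType) (X Y : finType) (H : {set {ffun X -> Y}})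
  (cost : X -> Y -> R) (f : {set X * Y} -> R) (Q OPT : R) :
  (forall x y, 0 < cost x y) ->
  (1 < #|Y|)%N ->
  H != set0 ->
  (forall S, 0 <= f S) ->
  0 < Q ->
  submodular f ->
  f set0 = 0 ->
  consistency_aware H f Q ->
  is_OPT H cost f Q OPT ->
  exists x : X,
    Q / (2 * Num.min (gcost cost) (Rcost cost) * OPT) <= ufun H cost f Q x set0.
Proof.
move=> cost_gt0 card_Y_gt1 H_neq0 f_ge0 Q_gt0 f_submod f0 f_ca [[A [A_feasible A_cost]] _].
have [hx hxH hx_ufun] := fin_all_exists2 (fun x => ufun0_attained cost f Q x H_neq0).
pose g := [ffun x => hx x x].
have g_realizable x : exists2 h, h \in H & h x = g x by exists (hx x); rewrite ?ffunE.
have g_ufun x : ufun H cost f Q x set0 * cost x (g x) = Num.min (f [set (x, g x)]) Q.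
  by rewrite hx_ufun ffunE divfK ?gt_eqF // /delta setU0 f0 (min_l (ltW Q_gt0)) subr0.
have [T [QT costT gT]] := exists_cheap_goal_set cost_gt0 card_Y_gt1 H_neq0 Q_gt0 f0 f_ca
  A_feasible A_cost g_realizable.
have [p _ le_u] := exists_ge_weighted_avg Q_gt0 (fun p => cost_gt0 p.1 p.2) costT
  (le_sum_ufun f_ge0 Q_gt0 f0 f_submod g_ufun QT gT).
by exists p.1.
Qed.
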